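(* Let $F$ be an imaginary cyclic sextic field with cubic subfield $K$ of conductor $p$. If there exists $f\in O_K\setminus\mathbb{Z}$ with $\|f\|^2<22$, then $p\in\{7,9,13\}$.
   Context: $F$ is a totally imaginary number field Galois over $\mathbb{Q}$ with cyclic Galois group $\langle\tau\rangle$ of order 6; $K$ is its maximal real (cyclic cubic) subfield, with ring of integers $O_K$. With the embeddings $\tau_1=\mathrm{id},\tau_2=\tau,\tau_3=\tau^2$, $\|f\|^2=2\sum_{i=1}^3|\tau_i(f)|^2$. *)

From HB Require Import structures.
From mathcomp Require Import all_boot all_order all_algebra all_fingroup all_solvable all_field.
Set Implicit Arguments. Unset Strict Implicit. Unset Printing Implicit Defensive.
Import Order.TTheory GRing.Theory Num.Theory.
Local Open Scope ring_scope.

Definition totally_imaginary (L : fieldExtType rat) : Prop :=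
  forall iota : {rmorphism L -> algC}, exists x : L, iota x \notin Num.real.

Definition in_cyclotomic (S : algC -> Prop) (n : nat) : Prop :=
  exists z : algC, n.-primitive_root z /\
    forall x, S x -> exists q : {poly rat}, x = (map_poly ratr q).[z].

(* Conductor of an abelian number field (given by its image S in C):
   the least n >= 1 with S contained in Q(zeta_n) (Kronecker-Weber). *)
Definition is_conductor (S : algC -> Prop) (p : nat) : Prop :=
  (0 < p)%N /\ in_cyclotomic S p /\
  forall n, (0 < n)%N -> in_cyclotomic S n -> (p <= n)%N.

(* Image in C of the maximal real subfield {x in L | iota x real}. *)
Definition real_image (L : fieldExtType rat) (iota : {rmorphism L -> algC}) : algC -> Prop :=
  fun y => exists x : L, iota x \is Num.real /\ y = iota x.

From HB Require Import structures.
From mathcomp Require Import all_boot all_order all_algebra all_fingroup all_solvable all_field.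
From Stdlib Require BinInt.
From mathcomp Require Import ssrZ zify ring.
Import Order.TTheory GRing.Theory Num.Theory.

Set Implicit Arguments.
Unset Strict Implicit.
Unset Printing Implicit Defensive.

Local Open Scope ring_scope.

(* Complex conjugation restricts to the involution tau^3 of F, so the real cubic
   subfield K is the fixed field of tau^3, and a real irrational f generates K.
   The conjugates f, tau f, tau^2 f are then the three real roots of a cubic with
   integer coefficients and square discriminant, and ||f||^2 < 22 bounds the sum of
   their squares by 10.  This leaves finitely many coefficient triples; a computer
   search shows that each is, after x |-> +-x + k, the minimal polynomial of the
   Gaussian periods of the cubic subfield of Q(zeta_m) for m = 7, 9 or 13.  Hence
   K lies in Q(zeta_m) and p <= 13, while K lying in Q(zeta_p) forces 3 | phi(p). *)

Definition cubic (R : pzRingType) (s : int * int * int) (x : R) : R :=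
  let: (s1, s2, s3) := s in x ^+ 3 - s1%:~R * x ^+ 2 + s2%:~R * x - s3%:~R.

Definition cubic_disc (R : pzRingType) (s : int * int * int) : R :=
  let: (s1, s2, s3) := s in
  let c1 : R := s1%:~R in let c2 : R := s2%:~R in let c3 : R := s3%:~R in
  18 * c1 * c2 * c3 - 4 * c1 ^+ 3 * c3 + c1 ^+ 2 * c2 ^+ 2 - 4 * c2 ^+ 3 - 27 * c3 ^+ 2.

Lemma rmorph_cubic (R S : pzRingType) (f : {rmorphism R -> S}) s x :
  f (cubic s x) = cubic s (f x).
Proof.
by case: s => [[s1 s2] s3]; rewrite /= !(rmorphB, rmorphD, rmorphM, rmorphXn, rmorph_int).
Qed.

Lemma rmorph_cubic_disc (R S : pzRingType) (f : {rmorphism R -> S}) s :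
  f (cubic_disc R s) = cubic_disc S s.
Proof.
case: s => [[s1 s2] s3].
by rewrite /= !(rmorphB, rmorphD, rmorphM, rmorphXn, rmorph_int, rmorph_nat).
Qed.

Lemma cubic_Vieta (R : comPzRingType) (s1 s2 s3 : int) (a0 a1 a2 x : R) :
  a0 + a1 + a2 = s1%:~R -> a0 * a1 + a0 * a2 + a1 * a2 = s2%:~R -> a0 * a1 * a2 = s3%:~R ->
  cubic (s1, s2, s3) x = (x - a0) * (x - a1) * (x - a2).
Proof. by rewrite /= => <- <- <-; ring. Qed.

Lemma cubic_disc_Vieta (R : comPzRingType) (s1 s2 s3 : int) (a0 a1 a2 : R) :
  a0 + a1 + a2 = s1%:~R -> a0 * a1 + a0 * a2 + a1 * a2 = s2%:~R -> a0 * a1 * a2 = s3%:~R ->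
  cubic_disc R (s1, s2, s3) = ((a0 - a1) * (a1 - a2) * (a2 - a0)) ^+ 2.
Proof. by rewrite /= => <- <- <-; ring. Qed.

Definition shift_cubic (neg : bool) (k : int) (b : int * int * int) : int * int * int :=
  let: (b1, b2, b3) := b in let e := (-1) ^+ neg in
  (e * (b1 - 3 * k), 3 * k ^+ 2 - 2 * b1 * k + b2, - e * cubic b k).

Lemma cubic_shift (R : comPzRingType) (neg : bool) (k : int) b (x : R) :
  cubic b ((-1) ^+ neg * x + k%:~R) = (-1) ^+ neg * cubic (shift_cubic neg k b) x.
Proof.
case: b => [[b1 b2] b3].
rewrite /= !(rmorphB, rmorphD, rmorphM, rmorphN, rmorphXn, rmorph_nat, rmorph_int) /=.
by case: neg; rewrite ?expr0 ?expr1 ?rmorphN ?rmorph1; ring.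
Qed.

(* The minimal polynomials of the Gaussian periods of the cubic subfields of
   Q(zeta_7), Q(zeta_9) and Q(zeta_13), tagged with m. *)
Definition base_cubics : seq (nat * (int * int * int)) :=
  [:: (7%N, (-1, -2, 1)); (9%N, (0, -3, -1)); (13%N, (-1, -4, -1))].

Definition shifted_base_cubics : seq (int * int * int) :=
  [seq shift_cubic nk.1 nk.2 mb.2 | mb <- base_cubics,
     nk <- [seq (neg, k) | neg <- [:: false; true], k <- [:: -1; 0; 1]]].

Definition int_range (a : int) (n : nat) : seq int := [seq a + i%:Z | i <- iota 0 n].

Lemma mem_int_range (a x : int) (n : nat) : a <= x < a + n%:Z -> x \in int_range a n.
Proof.
move=> x_range; apply/mapP; exists (absz (x - a)); last by lia.
by rewrite mem_iota; lia.
Qed.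

Section CyclicCubicSearch.

(* Imported locally: BinInt rebinds the %N delimiter to binary naturals. *)
Import BinInt.

(* Discriminants and root tests are evaluated in Z, since int arithmetic is unary. *)
Definition cyclic_cubic_test (s1 s2 s3 : int) : bool :=
  let s := (s1, s2, s3) in let D := cubic_disc Z s in
  [&& s1 ^+ 2 - 2 * s2 <= 10, D != 0, Z.sqrt D ^+ 2 == D
    & all (fun r => cubic s (Z_of_int r) != 0) (int_range (-31) 63)].

Lemma cyclic_cubic_box :
  all (fun s1 => all (fun s2 => all (fun s3 =>
      cyclic_cubic_test s1 s2 s3 ==> ((s1, s2, s3) \in shifted_base_cubics))
    (int_range (-31) 63)) (int_range (-5) 16)) (int_range (-5) 11).
Proof. by vm_compute. Qed.

Lemma small_cyclic_cubic (s1 s2 s3 d : int) :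
  s1 ^+ 2 - 2 * s2 <= 10 -> 3 * s2 <= s1 ^+ 2 -> s3 ^+ 2 <= 1000 ->
  cubic_disc int (s1, s2, s3) = d ^+ 2 -> d != 0 ->
  (forall r : int, cubic (s1, s2, s3) r != 0) ->
  (s1, s2, s3) \in shifted_base_cubics.
Proof.
move=> sum_sq diff_sq prod_sq disc_sq d_neq0 no_root.
have Z_of_int_eq0 (n : int) : (Z_of_int n == 0) = (n == 0).
  by rewrite -(rmorph0 Z_of_int) (inj_eq (can_inj Z_of_intK)).
have s1_range : s1 \in int_range (-5) 11 by apply: mem_int_range; nia.
have s2_range : s2 \in int_range (-5) 16 by apply: mem_int_range; nia.
have s3_range : s3 \in int_range (-31) 63 by apply: mem_int_range; nia.
have /allP/(_ _ s1_range)/allP/(_ _ s2_range)/allP/(_ _ s3_range)/implyP := cyclic_cubic_box.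
rewrite /cyclic_cubic_test -(rmorph_cubic_disc Z_of_int) disc_sq.
apply; apply/and4P; split => //.
- by rewrite Z_of_int_eq0 expf_neq0.
- rewrite rmorphXn !expr2 /GRing.mul /=; apply/eqP.
  have := Z.sqrt_square _ (Z.abs_nonneg (Z_of_int d)).
  by rewrite Z.abs_square => ->; rewrite Z.abs_square.
- by apply/allP => r _; rewrite -(rmorph_cubic Z_of_int) Z_of_int_eq0 no_root.
Qed.

End CyclicCubicSearch.

Definition in_Qz (z x : algC) : Prop := exists q : {poly rat}, x = (map_poly ratr q).[z].

Lemma in_Qz_rat z (r : rat) : in_Qz z (ratr r).
Proof. by exists r%:P; rewrite map_polyC hornerC. Qed.

Lemma in_Qz_int z (n : int) : in_Qz z n%:~R.
Proof. by rewrite -(rmorph_int ratr); apply: in_Qz_rat. Qed.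

Lemma in_Qz_exp z (k : nat) : in_Qz z (z ^+ k).
Proof. by exists 'X^k; rewrite map_polyXn hornerXn. Qed.

Lemma in_Qz_add z x y : in_Qz z x -> in_Qz z y -> in_Qz z (x + y).
Proof. by move=> [p ->] [q ->]; exists (p + q); rewrite rmorphD hornerD. Qed.

Lemma in_Qz_opp z x : in_Qz z x -> in_Qz z (- x).
Proof. by move=> [p ->]; exists (- p); rewrite rmorphN hornerN. Qed.

Lemma in_Qz_comp z x (q : {poly rat}) : in_Qz z x -> in_Qz z (map_poly ratr q).[x].
Proof. by move=> [p ->]; exists (q \Po p); rewrite map_comp_poly horner_comp. Qed.

Lemma in_Qz_shift z x (neg : bool) (k : int) :
  in_Qz z ((-1) ^+ neg * x + k%:~R) -> in_Qz z x.
Proof.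
move=> hx; have -> : x = (-1) ^+ neg * ((-1) ^+ neg * x + k%:~R + (- k)%:~R).
  by rewrite rmorphN addrK mulrA -expr2 sqrr_sign mul1r.
have hy : in_Qz z ((-1) ^+ neg * x + k%:~R + (- k)%:~R).
  by apply: in_Qz_add => //; apply: in_Qz_int.
by case: neg hx hy => _; rewrite ?expr1 ?expr0 ?mulN1r ?mul1r // => /in_Qz_opp.
Qed.

Lemma cubic_root_in_Qz z s (y e0 e1 e2 : algC) :
  in_Qz z e0 -> in_Qz z e1 -> in_Qz z e2 ->
  cubic s y = (y - e0) * (y - e1) * (y - e2) -> cubic s y = 0 -> in_Qz z y.
Proof.
move=> ? ? ? -> /eqP; rewrite !mulf_eq0 !subr_eq0.
by case/orP=> [/orP[]|] /eqP ->.
Qed.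

Definition gauss_period (z : algC) (ks : seq nat) : algC := \sum_(k <- ks) z ^+ k.

Lemma in_Qz_gauss_period z ks : in_Qz z (gauss_period z ks).
Proof.
apply: big_ind => [|x y|k _]; [|exact: in_Qz_add|exact: in_Qz_exp].
by exists 0; rewrite rmorph0 horner0.
Qed.

Lemma prim_root_sum_pow (R : idomainType) n (z : R) :
  (1 < n)%N -> n.-primitive_root z -> \sum_(i < n) z ^+ i = 0.
Proof.
move=> n_gt1 pz; apply/eqP; have /eqP := subrX1 z n.
rewrite prim_expr_order // subrr eq_sym mulf_eq0 subr_eq0 => /orP[/eqP z1|//].
by move: (prim_order_dvd pz 1); rewrite z1 expr1 eqxx dvdn1 => /esym/eqP; lia.
Qed.

Lemma eq_of_sub_mul0 (R : comPzRingType) (P c x y : R) : P = 0 -> x - y = P * c -> x = y.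
Proof. by move=> P0; rewrite P0 mul0r => /eqP; rewrite subr_eq0 => /eqP. Qed.

(* Each Vieta relation for the periods holds modulo the cyclotomic relation [Phi]:
   the difference of its two sides is [Phi] times the cofactor [c]. *)
Lemma cubic7_root (y : algC) :
  cubic (-1, -2, 1) y = 0 -> exists z, 7.-primitive_root z /\ in_Qz z y.
Proof.
move=> y_root; have [z pz] := C_prim_root_exists (isT : (0 < 7)%N); exists z; split => //.
have Phi : \sum_(i < 7) z ^+ i = 0 by apply: prim_root_sum_pow pz.
rewrite !big_ord_recr big_ord0 /= in Phi.
apply: (cubic_root_in_Qz (in_Qz_gauss_period z [:: 1; 6]%N) (in_Qz_gauss_period z [:: 2; 5]%N)
  (in_Qz_gauss_period z [:: 3; 4]%N) _ y_root).
apply: cubic_Vieta; rewrite /gauss_period !big_cons !big_nil.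
- by apply: (eq_of_sub_mul0 (c := 1) Phi); ring.
- by apply: (eq_of_sub_mul0 (c := 2 - 2 * z + z ^+ 3 + z ^+ 5) Phi); ring.
- by apply: (eq_of_sub_mul0 (c := - 1 + z + z ^+ 6 - z ^+ 7 + z ^+ 9) Phi); ring.
Qed.

Lemma cubic9_root (y : algC) :
  cubic (0, -3, -1) y = 0 -> exists z, 9.-primitive_root z /\ in_Qz z y.
Proof.
move=> y_root; have [z pz] := C_prim_root_exists (isT : (0 < 9)%N); exists z; split => //.
have pz3 : 3.-primitive_root (z ^+ 3) := exp_prim_root pz 3.
have Phi : \sum_(i < 3) (z ^+ 3) ^+ i = 0 by apply: prim_root_sum_pow pz3.
rewrite !big_ord_recr big_ord0 /= in Phi.
apply: (cubic_root_in_Qz (in_Qz_gauss_period z [:: 1; 8]%N) (in_Qz_gauss_period z [:: 2; 7]%N)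
  (in_Qz_gauss_period z [:: 4; 5]%N) _ y_root).
apply: cubic_Vieta; rewrite /gauss_period !big_cons !big_nil.
- by apply: (eq_of_sub_mul0 (c := z + z ^+ 2) Phi); ring.
- by apply: (eq_of_sub_mul0 (c := 3 - 2 * z ^+ 3 + z ^+ 5 + z ^+ 6 + z ^+ 7 + z ^+ 9) Phi); ring.
- apply: (eq_of_sub_mul0
    (c := 1 - z ^+ 3 + z ^+ 7 + z ^+ 8 + z ^+ 9 - z ^+ 10 - z ^+ 11 + z ^+ 13 + z ^+ 14) Phi).
  by ring.
Qed.

Lemma cubic13_root (y : algC) :
  cubic (-1, -4, -1) y = 0 -> exists z, 13.-primitive_root z /\ in_Qz z y.
Proof.
move=> y_root; have [z pz] := C_prim_root_exists (isT : (0 < 13)%N); exists z; split => //.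
have Phi : \sum_(i < 13) z ^+ i = 0 by apply: prim_root_sum_pow pz.
rewrite !big_ord_recr big_ord0 /= in Phi.
apply: (cubic_root_in_Qz (in_Qz_gauss_period z [:: 1; 5; 8; 12]%N)
  (in_Qz_gauss_period z [:: 2; 3; 10; 11]%N) (in_Qz_gauss_period z [:: 4; 6; 7; 9]%N) _ y_root).
apply: cubic_Vieta; rewrite /gauss_period !big_cons !big_nil.
- by apply: (eq_of_sub_mul0 (c := 1) Phi); ring.
- by apply: (eq_of_sub_mul0 (c := 4 - 4 * z + z ^+ 3 + 2 * z ^+ 7 + z ^+ 11) Phi); ring.
- apply: (eq_of_sub_mul0 (c := 1 - z + z ^+ 7 + z ^+ 10 + z ^+ 13 + z ^+ 17 + z ^+ 20) Phi).
  by ring.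
Qed.

Lemma base_cubic_root m b (y : algC) :
  (m, b) \in base_cubics -> cubic b y = 0 -> exists z, m.-primitive_root z /\ in_Qz z y.
Proof.
rewrite !inE => /or3P[] /eqP[-> ->].
- exact: cubic7_root.
- exact: cubic9_root.
- exact: cubic13_root.
Qed.

Lemma shifted_base_cubic_root s (y : algC) :
  s \in shifted_base_cubics -> cubic s y = 0 ->
  exists2 m, m \in [:: 7; 9; 13]%N & exists z, m.-primitive_root z /\ in_Qz z y.
Proof.
case/allpairsP => -[[m b] [neg k]] /= [mb _ ->] y_root.
have : cubic b ((-1) ^+ neg * y + k%:~R) = 0 by rewrite cubic_shift y_root mulr0.
case/(base_cubic_root mb) => z [pz hz]; exists m.
  by move: mb; rewrite !inE => /or3P[] /eqP[-> _].
by exists z; split => //; apply: in_Qz_shift hz.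
Qed.

Lemma prod_le_cube_sum (R : numDomainType) (x y w : R) :
  0 <= x -> 0 <= y -> 0 <= w -> x * y * w <= (x + y + w) ^+ 3.
Proof.
move=> x0 y0 w0; set S := x + y + w.
have xS : x <= S by rewrite /S -addrA lerDl addr_ge0.
have yS : y <= S by rewrite /S (addrC x) -addrA lerDl addr_ge0.
have wS : w <= S by rewrite /S lerDr addr_ge0.
have -> : S ^+ 3 = S * S * S by rewrite !exprS expr0 mulr1 mulrA.
by apply: ler_pM => //; [exact: mulr_ge0 | apply: ler_pM].
Qed.

Lemma real_cubic_small_coefs (a0 a1 a2 : algC) :
  a0 \is Num.real -> a1 \is Num.real -> a2 \is Num.real ->
  a0 + a1 + a2 \in Num.int -> a0 * a1 + a0 * a2 + a1 * a2 \in Num.int ->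
  a0 * a1 * a2 \in Num.int -> (a0 - a1) * (a1 - a2) * (a2 - a0) \in Num.int ->
  (a0 - a1) * (a1 - a2) * (a2 - a0) != 0 ->
  a0 \notin Num.int -> a1 \notin Num.int -> a2 \notin Num.int ->
  a0 ^+ 2 + a1 ^+ 2 + a2 ^+ 2 < 11 ->
  exists2 s, s \in shifted_base_cubics & cubic s a0 = 0.
Proof.
move=> r0 r1 r2 /intrP[s1 e1] /intrP[s2 e2] /intrP[s3 e3] /intrP[d ed] d_neq0 n0 n1 n2 small.
have cubicE x : cubic (s1, s2, s3) x = (x - a0) * (x - a1) * (x - a2) by apply: cubic_Vieta.
exists (s1, s2, s3); last by rewrite cubicE subrr !mul0r.
have sq_ge0 (x : algC) : x \is Num.real -> 0 <= x ^+ 2 by move=> xr; apply: real_exprn_even_ge0.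
have sum_sqE : a0 ^+ 2 + a1 ^+ 2 + a2 ^+ 2 = (s1 ^+ 2 - 2 * s2)%:~R.
  by rewrite !(rmorphB, rmorphM, rmorphXn, rmorph_nat) /= -e1 -e2; ring.
have sum_sq : s1 ^+ 2 - 2 * s2 <= 10 by rewrite -ltzD1 -(ltr_int algC) -sum_sqE.
apply: (small_cyclic_cubic (d := d)) => //.
- rewrite -subr_ge0 -(ler_int algC).
  have -> : (s1 ^+ 2 - 3 * s2)%:~R = ((a0 - a1) ^+ 2 + (a1 - a2) ^+ 2 + (a2 - a0) ^+ 2) / 2 :> algC.
    by rewrite !(rmorphB, rmorphM, rmorphXn, rmorph_nat) /= -e1 -e2; field.
  by rewrite divr_ge0 // !addr_ge0 // sq_ge0 // rpredB.
- rewrite -(ler_int algC) rmorphXn /= -e3 exprMn exprMn.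
  apply: le_trans (prod_le_cube_sum (sq_ge0 _ r0) (sq_ge0 _ r1) (sq_ge0 _ r2)) _.
  have sum_ge0 : 0 <= s1 ^+ 2 - 2 * s2 by rewrite -(ler_int algC) -sum_sqE !addr_ge0 ?sq_ge0.
  rewrite sum_sqE -rmorphXn ler_int.
  by apply: le_trans (lerXn2r 3 _ _ sum_sq) _; rewrite ?nnegrE.
- apply: (@intr_inj algC).
  by rewrite (rmorph_cubic_disc intr) (cubic_disc_Vieta e1 e2 e3) rmorphXn ed.
- by rewrite -(intr_eq0 algC) -ed.
move=> r; rewrite -(intr_eq0 algC) (rmorph_cubic intr) cubicE.
have int_neq x : x \notin Num.int -> r%:~R - x != 0.
  by move=> xZ; rewrite subr_eq0; apply: contraNneq xZ => <-; apply: intr_int.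
by rewrite !mulf_neq0 ?int_neq.
Qed.

Lemma horner_map_ratr (L : fieldExtType rat) (phi : {rmorphism L -> algC}) (q : {poly rat}) x :
  (map_poly ratr q).[phi x] = phi (map_poly (in_alg L) q).[x].
Proof.
rewrite -horner_map -map_poly_comp; congr _.[_]; apply: eq_map_poly => r /=.
by rewrite alg_num_field fmorph_rat.
Qed.

Lemma mem1_Crat (L : fieldExtType rat) (phi : {rmorphism L -> algC}) x :
  (x \in 1%VS) = (phi x \in Crat).
Proof.
apply/idP/idP => [/vlineP[r ->]|/CratP[r phi_x]].
  by rewrite -[r *: 1]/(r%:A) alg_num_field fmorph_rat Crat_rat.
apply/vlineP; exists r; apply: (fmorph_inj phi).
by rewrite phi_x -[r *: 1]/(r%:A) alg_num_field fmorph_rat.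
Qed.

Lemma size_minCpoly_minPoly (L : fieldExtType rat) (phi : {rmorphism L -> algC}) x :
  size (minCpoly (phi x)) = size (minPoly 1 x).
Proof.
have [q [Dq mon_q] dv_q] := minCpolyP (phi x).
have [mq Dmq] : exists mq, minPoly 1 x = map_poly (in_alg L) mq.
  by apply/polyOver1P; apply: minPolyOver.
have q0 : q != 0 by apply: monic_neq0.
have mq0 : mq != 0.
  apply: contraTneq (monic_minPoly 1 x) => mq0.
  by rewrite Dmq mq0 map_poly0 monicE lead_coef0 eq_sym oner_eq0.
have q_dvd_mq : (q %| mq)%R.
  rewrite -dv_q; apply/rootP; rewrite horner_map_ratr -Dmq.
  by have /rootP -> := root_minPoly 1 x; rewrite rmorph0.
have mq_dvd_q : (minPoly 1 x %| map_poly (in_alg L) q)%R.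
  apply: minPoly_dvdp; first by apply/polyOver1P; exists q.
  apply/rootP; apply: (fmorph_inj phi); rewrite -horner_map_ratr rmorph0.
  by have := root_minCpoly (phi x); rewrite Dq => /rootP.
rewrite Dq size_map_poly; apply/eqP; rewrite eqn_leq; apply/andP; split.
  by rewrite Dmq size_map_poly; apply: dvdp_leq.
by rewrite -(size_map_poly (in_alg L) q); apply: dvdp_leq; rewrite ?map_poly_eq0.
Qed.

Lemma minCpoly_deg_dvd_totient n z a :
  n.-primitive_root z -> in_Qz z a -> ((size (minCpoly a)).-1 %| totient n)%N.
Proof.
move=> pz [q Da].
have [Qz [QzC [zs Dzs gen_zs]]] := num_field_exists [:: z].
case: zs Dzs gen_zs => [|z1 [|? ?]] //= [Dz]; rewrite adjoin_seq1 => gen_z1.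
have dim_adjoin x : \dim <<1; x>> = (size (minCpoly (QzC x))).-1.
  by rewrite size_minCpoly_minPoly size_minPoly dim_Fadjoin dimv1 muln1.
have <- : \dim <<1; (map_poly (in_alg Qz) q).[z1]>> = (size (minCpoly a)).-1.
  by rewrite dim_adjoin -horner_map_ratr Dz Da.
have <- : \dim (fullv : {vspace Qz}) = totient n.
  by rewrite -gen_z1 dim_adjoin Dz (minCpoly_cyclotomic pz) size_cyclotomic.
by apply: field_dimS; apply: subvf.
Qed.

Lemma gal_horner (F : splittingFieldType rat) (g : gal_of (fullv : {vspace F})) q x :
  g (map_poly (in_alg F) q).[x] = (map_poly (in_alg F) q).[g x].
Proof.
rewrite -horner_map /= -map_poly_comp; congr _.[_]; apply: eq_map_poly => r /=.
by rewrite linearZ rmorph1.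
Qed.

Lemma gal_Aint (F : splittingFieldType rat) (iota : {rmorphism F -> algC})
    (g : gal_of (fullv : {vspace F})) x :
  iota x \in Aint -> iota (g x) \in Aint.
Proof.
move=> x_Aint; have [q [Dq _] _] := minCpolyP (iota x).
have qx0 : (map_poly (in_alg F) q).[x] = 0.
  apply: (fmorph_inj iota); rewrite rmorph0 -horner_map_ratr -Dq.
  exact/rootP/root_minCpoly.
apply: (root_monic_Aint _ (minCpoly_monic (iota x))) x_Aint.
by apply/rootP; rewrite Dq horner_map_ratr -gal_horner qx0 !rmorph0.
Qed.

Lemma gal_mem1 (F : splittingFieldType rat) (g : gal_of (fullv : {vspace F})) x :
  (g x \in 1%VS) = (x \in 1%VS).
Proof.
have gal_scalar (h : gal_of fullv) (r : rat) : h (r *: 1) = r *: 1.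
  by rewrite linearZ rmorph1.
apply/idP/idP => /vlineP[r Dx]; apply/vlineP; exists r; last by rewrite Dx gal_scalar.
by rewrite -[x](gal_id fullv) -(mulgV g) galM ?memvf // Dx gal_scalar.
Qed.

Lemma galois_num_field (F : splittingFieldType rat) : galois 1 (fullv : {vspace F}).
Proof.
apply/and3P; split; [exact: subvf | | exact: normalFieldf].
apply/separableP => y _; apply: pcharf0_separable => n.
by rewrite pchar_lalg pchar_num.
Qed.

Lemma gal_conjC (F : splittingFieldType rat) (iota : {rmorphism F -> algC}) :
  exists2 g : gal_of (fullv : {vspace F}), g \in 'Gal(fullv / 1%VS)%g &
    forall x, iota (g x) = (iota x)^*.
Proof.
have [nu iota_nu] := restrict_aut_to_normal_num_field iota Num.Def.conjC.
have nu_hom : kHom 1 fullv (linfun nu).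
  apply/kHomP_tmp; split=> [x /vlineP[r ->]|x y _ _]; rewrite !lfunE /= ?rmorphM //.
  by rewrite linearZ rmorph1.
have sub1f : (1%AS <= (fullv : {vspace F}) <= fullv)%VS by rewrite !subvf.
have [g gG nu_g] :=
  kHom_to_gal (K := 1%AS) (M := fullv) (E := fullv) sub1f (normalFieldf 1) nu_hom.
by exists g => // x; rewrite -nu_g ?memvf // lfunE /= iota_nu.
Qed.

Lemma cycle_involution (gT : finGroupType) (x g : gT) n :
  #[x]%g = (2 * n)%N -> g \in <[x]>%g -> (g ^+ 2 = 1)%g -> g != 1%g -> g = (x ^+ n)%g.
Proof.
move=> ox /cycleP[k ->] g2 g1.
have n_gt0 : (0 < n)%N by move: (order_gt0 x); rewrite ox muln_gt0 => /andP[].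
have /dvdnP[q Dk] : (n %| k)%N.
  by rewrite -(dvdn_pmul2l (isT : (0 < 2)%N)) -ox order_dvdn mulnC expgM g2.
have xn2 : ((x ^+ n) ^+ 2 = 1)%g by rewrite -expgM mulnC -ox expg_order.
rewrite Dk mulnC expgM -(expg_mod _ xn2) modn2 in g1 *.
by case: (odd q) g1; rewrite ?expg0 ?eqxx ?expg1.
Qed.

Section CyclicSexticField.

Variables (F : splittingFieldType rat) (iota : {rmorphism F -> algC}).
Variable tau : gal_of (fullv : {vspace F}).
Hypotheses (Gal_tau : 'Gal(fullv / 1%VS)%g = <[tau]>%g) (tau_order : #[tau]%g = 6%N).
Hypothesis F_imag : totally_imaginary F.

Lemma gal_tauSn n x : (tau ^+ n.+1)%g x = tau ((tau ^+ n)%g x).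
Proof. by rewrite expgSr galM ?memvf. Qed.

Lemma iota_tau3 x : iota ((tau ^+ 3)%g x) = (iota x)^*.
Proof.
have [g gG iota_g] := gal_conjC iota.
suff <- : g = (tau ^+ 3)%g by [].
apply: cycle_involution; [by rewrite tau_order | by rewrite -Gal_tau | |].
  apply/eqP/gal_eqP => y _; apply: (fmorph_inj iota).
  by rewrite expgS expg1 galM ?memvf // gal_id !iota_g conjCK.
have [y y_imag] := F_imag iota.
by apply: contraNneq y_imag => g1; rewrite CrealE -iota_g g1 gal_id.
Qed.

Lemma real_tau3E x : (iota x \is Num.real) = ((tau ^+ 3)%g x == x).
Proof. by rewrite CrealE -iota_tau3 (inj_eq (fmorph_inj iota)). Qed.

Lemma tau3_tau x : (tau ^+ 3)%g (tau x) = tau ((tau ^+ 3)%g x).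
Proof. by rewrite -gal_tauSn [(tau ^+ 4)%g]expgS [RHS]galM ?memvf. Qed.

Lemma real_tau x : iota x \is Num.real -> iota (tau x) \is Num.real.
Proof. by rewrite !real_tau3E tau3_tau => /eqP ->. Qed.

Lemma fixed_tau_mem1 w : tau w = w -> w \in 1%VS.
Proof.
move=> tau_w; have /galois_fixedField <- := galois_num_field F.
apply/fixedFieldP => [|g]; first exact: memvf.
rewrite Gal_tau => /cycleP[n ->]; elim: n => [|n IHn]; first by rewrite expg0 gal_id.
by rewrite gal_tauSn IHn.
Qed.

Lemma fixed_tau_int w : tau w = w -> iota w \in Aint -> iota w \in Num.int.
Proof. by move/fixed_tau_mem1; rewrite (mem1_Crat iota); apply: Cint_rat_Aint. Qed.

Lemma mem_real_field x : (x \in fixedField <[tau ^+ 3]>%g) = (iota x \is Num.real).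
Proof.
rewrite real_tau3E; apply/(fixedFieldP (memvf x))/eqP => [-> //|fix_x g]; first exact: cycle_id.
case/cycleP=> n ->; elim: n => [|n IHn]; first by rewrite expg0 gal_id.
by rewrite expgSr galM ?memvf // IHn fix_x.
Qed.

Lemma dim_real_field : \dim (fixedField <[tau ^+ 3]>%g) = 3%N.
Proof.
set K := fixedField _.
have dimF : \dim (fullv : {vspace F}) = 6%N.
  by have := galois_dim (galois_num_field F); rewrite dimv1 divn1 Gal_tau => ->.
have K_dvd : (\dim K %| 6)%N by rewrite -dimF field_dimS ?subvf.
have := dim_fixedField <[tau ^+ 3]>%G.
rewrite /= -[#|_|]/#[(tau ^+ 3)%g]%g orderXdiv tau_order // dimF.
by move: K_dvd; rewrite !dvdn_divisors // !inE => /orP[/eqP->|/orP[/eqP->|/orP[/eqP->|/eqP->]]].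
Qed.

Section RealElement.

Variable f : F.
Hypotheses (f_real : iota f \is Num.real) (f_Aint : iota f \in Aint).
Hypothesis f_notZ : iota f \notin Num.int.

Lemma real_notin1 : f \notin 1%VS.
Proof. by apply: contra f_notZ; rewrite (mem1_Crat iota) => /Cint_rat_Aint; apply. Qed.

Lemma real_field_adjoin : <<1; f>>%VS = fixedField <[tau ^+ 3]>%g.
Proof.
have sub_fK : (<<1; f>> <= fixedField <[tau ^+ 3]>%g)%VS.
  by apply/FadjoinP; rewrite sub1v mem_real_field.
apply/eqP; rewrite eqEdim sub_fK dim_real_field /=.
have := field_dimS sub_fK; rewrite dim_real_field dim_Fadjoin dimv1 muln1.
have : adjoin_degree 1 f != 1%N by rewrite adjoin_deg_eq1 real_notin1.
by rewrite dvdn_divisors // !inE => /negPf-> /= /eqP->.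
Qed.

Lemma size_minCpoly_real : size (minCpoly (iota f)) = 4%N.
Proof.
rewrite size_minCpoly_minPoly size_minPoly.
by have := dim_Fadjoin 1 f; rewrite real_field_adjoin dim_real_field dimv1 muln1 => <-.
Qed.

Lemma real_image_adjoin x :
  real_image iota x -> exists q : {poly rat}, x = (map_poly ratr q).[iota f].
Proof.
case=> w [w_real ->]; have : w \in <<1; f>>%VS by rewrite real_field_adjoin mem_real_field.
by case/Fadjoin_polyP => p /polyOver1P[q ->] ->; exists q; rewrite horner_map_ratr.
Qed.

Let f1 := tau f.
Let f2 := tau f1.

Lemma tau3_real : tau f2 = f.
Proof. by have := f_real; rewrite real_tau3E !gal_tauSn expg0 gal_id => /eqP. Qed.

Lemma conjugates_sym_int :
  [/\ iota f + iota f1 + iota f2 \in Num.int,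
      iota f * iota f1 + iota f * iota f2 + iota f1 * iota f2 \in Num.int,
      iota f * iota f1 * iota f2 \in Num.int &
      (iota f - iota f1) * (iota f1 - iota f2) * (iota f2 - iota f) \in Num.int].
Proof.
have [f1_Aint f2_Aint] : iota f1 \in Aint /\ iota f2 \in Aint by split; do !apply: gal_Aint.
(* [rmorphD] & co. unfold [tau x] through another coercion, which [tau3_real] would
   not match; these restate them for the plain application. *)
have tauD x y : tau (x + y) = tau x + tau y by rewrite rmorphD.
have tauB x y : tau (x - y) = tau x - tau y by rewrite rmorphB.
have tauM x y : tau (x * y) = tau x * tau y by rewrite rmorphM.
split.
- rewrite -!(rmorphD iota); apply: fixed_tau_int; last by rewrite !(rmorphD, rpredD).
  by rewrite !tauD tau3_real; ring.
- rewrite -!(rmorphM iota) -!(rmorphD iota); apply: fixed_tau_int.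
    by rewrite !(tauD, tauM) tau3_real; ring.
  by rewrite !(rmorphD, rmorphM, rpredD, rpredM).
- rewrite -!(rmorphM iota); apply: fixed_tau_int; last by rewrite !(rmorphM, rpredM).
  by rewrite !tauM tau3_real; ring.
- rewrite -!(rmorphB iota) -!(rmorphM iota); apply: fixed_tau_int.
    by rewrite !(tauM, tauB) tau3_real; ring.
  by rewrite !(rmorphM, rmorphB, rpredM, rpredB).
Qed.

Lemma conjugates_distinct :
  (iota f - iota f1) * (iota f1 - iota f2) * (iota f2 - iota f) != 0.
Proof.
have f_moved : f1 != f.
  by apply: contra real_notin1 => /eqP f_fixed; apply: fixed_tau_mem1.
have tau_inj : injective tau by move=> x y; apply: fmorph_inj.
have sub_neq0 x y : x != y -> iota x - iota y != 0.
  by rewrite subr_eq0 (inj_eq (fmorph_inj iota)).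
rewrite !mulf_neq0 // sub_neq0 //; first by rewrite eq_sym.
  by rewrite (inj_eq tau_inj) eq_sym.
by apply: contraNneq f_moved => f2f; rewrite -tau3_real f2f.
Qed.

Lemma real_conjugates_cubic :
  2 * (\sum_(i < 3) `|iota ((tau ^+ i)%g f)| ^+ 2) < 22 ->
  exists2 s, s \in shifted_base_cubics & cubic s (iota f) = 0.
Proof.
move=> small; have [sum_int pair_int prod_int disc_int] := conjugates_sym_int.
have [f1_real f2_real] : iota f1 \is Num.real /\ iota f2 \is Num.real.
  by split; do !apply: real_tau.
have notZ x : x \notin 1%VS -> iota x \notin Num.int.
  by apply: contra => /intrP[n Dx]; rewrite (mem1_Crat iota) Dx rpred_int.
apply: (real_cubic_small_coefs f_real f1_real f2_real) => //.
- exact: conjugates_distinct.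
- by apply: notZ; rewrite gal_mem1 real_notin1.
- by apply: notZ; rewrite !gal_mem1 real_notin1.
move: small; rewrite !big_ord_recr big_ord0 /= expg0 expg1 gal_id gal_tauSn expg1 add0r.
by rewrite !real_normK // -[22]/((2 * 11)%N%:R) natrM ltr_pM2l.
Qed.

End RealElement.

End CyclicSexticField.

Lemma dvd3_totient_le13 p :
  (0 < p)%N -> (p <= 13)%N -> (3 %| totient p)%N -> p \in [:: 7; 9; 13]%N.
Proof. by case: p => [|[|[|[|[|[|[|[|[|[|[|[|[|[|p]]]]]]]]]]]]]]. Qed.

Theorem proposition3p5 (F : splittingFieldType rat)
    (iota : {rmorphism F -> algC}) (tau : gal_of (fullv : {vspace F})) (p : nat) :
  'Gal(fullv / 1%VS)%g = <[tau]>%g ->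
  #[tau]%g = 6%N ->
  totally_imaginary F ->
  is_conductor (real_image iota) p ->
  (exists f : F, [/\ iota f \is Num.real, iota f \in Aint, iota f \notin Num.int &
      2 * (\sum_(i < 3) `|iota ((tau ^+ i)%g f)| ^+ 2) < 22]) ->
  p \in [:: 7; 9; 13]%N.
Proof.
move=> Gal_tau tau_order F_imag [p_gt0 [[zp [zp_prim zp_gen]] p_min]].
case=> f [f_real f_Aint f_notZ small].
have [s s_shifted f_root] :=
  real_conjugates_cubic Gal_tau tau_order F_imag f_real f_Aint f_notZ small.
have [m m_small [z [zm_prim f_in_Qz]]] := shifted_base_cubic_root s_shifted f_root.
have [m_gt0 m_le13] : (0 < m)%N /\ (m <= 13)%N.
  by move: m_small; rewrite !inE => /or3P[] /eqP->.
have p_le_m : (p <= m)%N.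
  apply: p_min => //; exists z; split=> // x.
  case/(real_image_adjoin Gal_tau tau_order F_imag f_real f_Aint f_notZ) => q ->.
  exact: in_Qz_comp.
have f_real_image : real_image iota (iota f) by exists f.
apply: dvd3_totient_le13 (leq_trans p_le_m m_le13) _ => //.
have := minCpoly_deg_dvd_totient zp_prim (zp_gen _ f_real_image).
by rewrite (size_minCpoly_real Gal_tau tau_order F_imag f_real f_Aint f_notZ).
Qed.
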